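(* Let $G$ be an almost hypohamiltonian graph containing a triangle $T$. Then every vertex of $T$ has degree at least $4$ in $G$.
   Context: All graphs are finite, undirected, connected, without loops or multiple edges. A graph is hamiltonian if it has a cycle through all its vertices. A non-hamiltonian graph $G$ is almost hypohamiltonian if there exists a vertex $w$ (the exceptional vertex) such that $G - w$ is non-hamiltonian and $G - v$ is hamiltonian for every vertex $v \neq w$. *)

From mathcomp Require Import all_boot.
Set Implicit Arguments. Unset Strict Implicit. Unset Printing Implicit Defensive.

Section Graphs.
Variable T : finType.

Definition simple_graph (e : rel T) : Prop := symmetric e /\ irreflexive e.

Definition connected_graph (e : rel T) : Prop := forall x y : T, connect e x y.

(* c is a hamiltonian cycle of the subgraph of e induced by vertex set S:
   c lists every vertex of S exactly once, at least 3 vertices,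
   and consecutive vertices (cyclically) are adjacent. *)
Definition ham_cycle_in (e : rel T) (S : {set T}) (c : seq T) : Prop :=
  [/\ uniq c, (forall x, (x \in c) = (x \in S)), 3 <= size c & cycle e c].

Definition hamiltonian_on (e : rel T) (S : {set T}) : Prop :=
  exists c, ham_cycle_in e S c.

Definition hamiltonian (e : rel T) : Prop := hamiltonian_on e [set: T].

Definition hamiltonian_minus (e : rel T) (v : T) : Prop :=
  hamiltonian_on e [set~ v].

Definition almost_hypohamiltonian (e : rel T) : Prop :=
  simple_graph e /\ connected_graph e /\ ~ hamiltonian e /\
  exists w : T, ~ hamiltonian_minus e w /\
                forall v : T, v != w -> hamiltonian_minus e v.

Definition degree (e : rel T) (x : T) : nat := #|[set y | e x y]|.

Definition triangle (e : rel T) (a b c : T) : Prop := [&& e a b, e b c & e a c].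

End Graphs.

(** Let [x] be a vertex of a triangle [a x y] such that [G - x] has a
    hamiltonian cycle [C]. The vertex [a] lies on [C] and has two distinct
    neighbours [u], [v] there, both different from [x]. If [y] were one of
    them, inserting [x] between [a] and [y] would turn [C] into a hamiltonian
    cycle of [G]; so [x], [y], [u], [v] are four distinct neighbours of [a].
    In an almost hypohamiltonian graph at most one vertex [w] has [G - w]
    non-hamiltonian, and at least one of the two other vertices of a
    triangle differs from [w]. *)

From mathcomp Require Import all_boot.

Section HamiltonianCycles.
Variables (T : finType) (e : rel T).

Lemma adj_neq x y : irreflexive e -> e x y -> x != y.
Proof. by move=> irr exy; apply/eqP=> Exy; rewrite Exy irr in exy. Qed.

Lemma size_le_degree a s : uniq s -> all (e a) s -> size s <= degree e a.
Proof.
move=> us /allP sa; rewrite /degree cardE; apply: uniq_leq_size => // z zs.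
by rewrite mem_enum inE sa.
Qed.

Lemma ham_cycle_rot {S c} n : ham_cycle_in e S c -> ham_cycle_in e S (rot n c).
Proof.
case=> uc mc sc cc; split; last by rewrite rot_cycle.
- by rewrite rot_uniq.
- by move=> z; rewrite mem_rot.
- by rewrite size_rot.
Qed.

Lemma ham_cycle_rev {S c} :
  symmetric e -> ham_cycle_in e S c -> ham_cycle_in e S (rev c).
Proof.
move=> sym [uc mc sc cc]; split; first by rewrite rev_uniq.
- by move=> z; rewrite mem_rev.
- by rewrite size_rev.
- by rewrite rev_cycle; apply: sub_cycle cc => z t; rewrite sym.
Qed.

Lemma ham_cycle_neighbours {S c a} :
  symmetric e -> ham_cycle_in e S c -> a \in c ->
  exists u v s, [/\ u != v, ham_cycle_in e S [:: a, u & rcons s v]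
                          & ham_cycle_in e S [:: a, v & rcons (rev s) u]].
Proof.
move=> sym hc ac; case: (rot_to ac) => i s0 Erot.
have {Erot}hc0 : ham_cycle_in e S (a :: s0) by rewrite -Erot; exact: ham_cycle_rot.
case: s0 hc0 => [|u s1]; first by case.
case/lastP: s1 => [|s v] hc1; first by case: hc1.
exists u, v, s; split=> //.
- case: hc1 => /and3P [_ + _] _ _ _.
  by apply: contraNneq => ->; rewrite mem_rcons mem_head.
- have := ham_cycle_rot (size s).+2 (ham_cycle_rev sym hc1).
  rewrite rev_cons rev_cons rev_rcons -rcons_cons.
  by rewrite -(rotr1_rcons a) /rotr size_rcons /= size_rcons size_rev subSS subn0.
Qed.

Lemma ham_cycle_insert S a x y s :
  ham_cycle_in e S [:: a, y & s] -> x \notin S -> e a x -> e x y ->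
  ham_cycle_in e (x |: S) [:: a, x, y & s].
Proof.
move=> [uc mc _ cc] xS eax exy; split=> //.
- have : x \notin [:: a, y & s] by rewrite mc.
  rewrite !inE !negb_or => /and3P [xa xy xs]; move: uc => /= /andP [].
  by rewrite !inE !negb_or (eq_sym a x) xa xy xs => -> ->.
- by move=> z; rewrite in_setU1 -mc !inE orbCA.
- by case/andP: cc => _; rewrite /= eax exy.
Qed.

Lemma degree_ge4_of_hamiltonian_minus a x y :
  simple_graph e -> ~ hamiltonian e -> hamiltonian_minus e x ->
  e a x -> e a y -> e x y -> 4 <= degree e a.
Proof.
move=> [sym irr] nH [c hc] eax eay exy.
have ac : a \in c by case: hc => _ -> _ _; rewrite !inE adj_neq.
have [u [v [s [uv hu hv]]]] := ham_cycle_neighbours sym hc ac.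
have nbr z t : ham_cycle_in e [set~ x] [:: a, z & t] -> [/\ e a z, z != x & z != y].
  move=> hz; split.
  - by case: hz => _ _ _ /andP [].
  - by case: hz => _ mz _ _; move: (mz z); rewrite !inE eqxx orbT => <-.
  - apply: contra_notN nH => /eqP Ezy; exists [:: a, x, z & t].
    rewrite -(setUCr [set x]); apply: ham_cycle_insert hz _ eax _.
      by rewrite !inE eqxx.
    by rewrite Ezy.
have [eau ux uy] := nbr _ _ hu; have [eav vx vy] := nbr _ _ hv.
apply: (size_le_degree _ [:: x; y; u; v]); last by rewrite /= eax eay eau eav.
by rewrite /= !inE !negb_or adj_neq // ![x == _]eq_sym ![y == _]eq_sym ux vx uy vy uv.
Qed.

Lemma almost_hypohamiltonian_triangle_degree a b c :
  almost_hypohamiltonian e -> e a b -> e a c -> e b c -> 4 <= degree e a.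
Proof.
move=> [[sym irr] [_ [nH [w [_ hw]]]]] eab eac ebc.
case: (eqVneq b w) => [Ebw | bw].
  apply: (degree_ge4_of_hamiltonian_minus a c b) => //; last by rewrite sym.
  by apply: hw; rewrite -Ebw eq_sym adj_neq.
exact: (degree_ge4_of_hamiltonian_minus a b c) (hw b bw) _ _ _.
Qed.

End HamiltonianCycles.

Theorem lemma3p5 (T : finType) (e : rel T) (a b c : T) :
  almost_hypohamiltonian e -> triangle e a b c ->
  [/\ 4 <= degree e a, 4 <= degree e b & 4 <= degree e c].
Proof.
move=> aH /and3P [eab ebc eac]; have [[sym _] _] := aH.
split.
- exact: almost_hypohamiltonian_triangle_degree aH eab eac ebc.
- by apply: almost_hypohamiltonian_triangle_degree aH _ ebc eac; rewrite sym.
- by apply: almost_hypohamiltonian_triangle_degree aH _ _ eab; rewrite sym.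
Qed.
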